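(* Let $G_1=(\{p_j\},\{\mu_j\},\{\sigma_j^2\})_{j=1}^n$ and $G_2=(\{p'_k\},\{\mu'_k\},\{\sigma_k'^2\})_{k=1}^{n'}$ be univariate Gaussian mixtures with all $\sigma_j>0$, $\sigma'_k>0$. Then $$\begin{aligned}C_2^2(G_1,G_2)=&\sum_{j=1}^n\sum_{k=1}^{n'}p_jp'_k\sqrt{\sigma_j^2+\sigma_k'^2}\,\Big[U\Big(\tfrac{\mu_j-\mu'_k}{\sqrt{\sigma_j^2+\sigma_k'^2}}\Big)+U\Big(\tfrac{\mu'_k-\mu_j}{\sqrt{\sigma_j^2+\sigma_k'^2}}\Big)\Big]\\&-\sum_{j=1}^n\sum_{k=1}^n p_jp_k\sqrt{\sigma_j^2+\sigma_k^2}\,U\Big(\tfrac{\mu_j-\mu_k}{\sqrt{\sigma_j^2+\sigma_k^2}}\Big)-\sum_{j=1}^{n'}\sum_{k=1}^{n'}p'_jp'_k\sqrt{\sigma_j'^2+\sigma_k'^2}\,U\Big(\tfrac{\mu'_j-\mu'_k}{\sqrt{\sigma_j'^2+\sigma_k'^2}}\Big).\end{aligned}$$ Equivalently, with $V(x)=\frac{U(x)+U(-x)}{2}$, $$C_2^2(G_1,G_2)=2\sum_{j,k}p_jp'_k\sqrt{\sigma_j^2+\sigma_k'^2}\,V\Big(\tfrac{\mu_j-\mu'_k}{\sqrt{\sigma_j^2+\sigma_k'^2}}\Big)-\sum_{j,k=1}^n p_jp_k\sqrt{\sigma_j^2+\sigma_k^2}\,V\Big(\tfrac{\mu_j-\m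u_k}{\sqrt{\sigma_j^2+\sigma_k^2}}\Big)-\sum_{j,k=1}^{n'}p'_jp'_k\sqrt{\sigma_j'^2+\sigma_k'^2}\,V\Big(\tfrac{\mu'_j-\mu'_k}{\sqrt{\sigma_j'^2+\sigma_k'^2}}\Big).$$
   Context: A univariate Gaussian mixture $G=(\{p_j\},\{\mu_j\},\{\sigma_j^2\})_{j=1}^n$ has $p_j\ge0$, $\sum_jp_j=1$, $\mu_j\in\mathbb{R}$, and CDF $\mathrm{CDF}(G)(x)=\sum_j p_j\Phi((x-\mu_j)/\sigma_j)$, where $\Phi$ is the standard normal CDF. The Cramér 2-distance is $C_2(G_1,G_2)=\left(\int_{\mathbb{R}}|\mathrm{CDF}(G_1)(x)-\mathrm{CDF}(G_2)(x)|^2dx\right)^{1/2}$. $U(x)=x\Phi(x)+\frac{1}{\sqrt{2\pi}}e^{-x^2/2}$. *)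

From Stdlib Require Import Reals.
From Coquelicot Require Import Coquelicot.
Open Scope R_scope.

Fixpoint sumR (n : nat) (f : nat -> R) : R :=
  match n with
  | O => 0
  | S m => sumR m f + f m
  end.

Definition phi (t : R) : R := exp (- t ^ 2 / 2) / sqrt (2 * PI).
Definition Phi (x : R) : R := RInt_gen phi (Rbar_locally m_infty) (at_point x).

Definition U (x : R) : R := x * Phi x + / sqrt (2 * PI) * exp (- x ^ 2 / 2).

(* a mixture with n components, weights p, means mu, std deviations s
   (indices 0..n-1) *)
Definition is_mixture (n : nat) (p mu s : nat -> R) : Prop :=
  (forall j, (j < n)%nat -> 0 <= p j) /\ sumR n p = 1.

Definition CDF (n : nat) (p mu s : nat -> R) (x : R) : R :=
  sumR n (fun j => p j * Phi ((x - mu j) / s j)).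

Definition C2 (n : nat) (p mu s : nat -> R) (n' : nat) (p' mu' s' : nat -> R) : R :=
  sqrt (RInt_gen (fun x => (CDF n p mu s x - CDF n' p' mu' s' x) ^ 2)
          (Rbar_locally m_infty) (Rbar_locally p_infty)).

Definition cross (n : nat) (p mu s : nat -> R) (n' : nat) (p' mu' s' : nat -> R) : R :=
  sumR n (fun j => sumR n' (fun k =>
    p j * p' k * sqrt (s j ^ 2 + s' k ^ 2) *
    (U ((mu j - mu' k) / sqrt (s j ^ 2 + s' k ^ 2))
     + U ((mu' k - mu j) / sqrt (s j ^ 2 + s' k ^ 2))))).

Definition self (n : nat) (p mu s : nat -> R) : R :=
  sumR n (fun j => sumR n (fun k =>
    p j * p k * sqrt (s j ^ 2 + s k ^ 2) *
    U ((mu j - mu k) / sqrt (s j ^ 2 + s k ^ 2)))).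

(* Writing F and G for the two CDFs, (F - G)^2 = (1 - F) G + (1 - G) F - (1 - F) F - (1 - G) G,
   so everything reduces to the integral of (1 - Phi_a) Phi_b, where Phi_a, phi_a are the CDF
   and density of N(a, sa^2) and Phi_b, phi_b those of N(b, sb^2).  With S = sqrt (sa^2 + sb^2)
   this integrand differs from (a - b) Phi_b phi_a + S^2 phi_b phi_a by an explicit derivative
   vanishing at both ends.  Completing the square gives int phi_b phi_a = phi((a - b)/S) / S.
   Differentiating under the integral sign, b |-> int Phi_b phi_a therefore has the same
   derivative as b |-> Phi((a - b)/S), and both equal 1/2 at b = a (by the symmetry
   x |-> 2 a - x), so int Phi_b phi_a = Phi((a - b)/S).  Adding up gives S U((a - b)/S).
   The normalisation of phi rests on the classical fact that
   (int_0^x e^(-t^2/2))^2 + 2 int_0^1 e^(-x^2 (1 + u^2)/2) / (1 + u^2) du is constant. *)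

From Stdlib Require Import Reals Lra Lia.
From Coquelicot Require Import Coquelicot.
Open Scope R_scope.

Notation minf := (Rbar_locally m_infty).
Notation pinf := (Rbar_locally p_infty).

(** * Calculus on the real line *)

(* [auto_derive] states its side equation over a normed-module carrier and rewrites
   [a - b], [a / b] into [a + - b], [a * / b]; normalize both before calling [field]. *)
Ltac field_R :=
  match goal with |- ?a = ?b => change (@eq R a b) end; unfold Rminus, Rdiv; field.

Lemma ex_derive_continuous_R (f : R -> R) x : ex_derive f x -> continuous f x.
Proof. exact (ex_derive_continuous f x). Qed.

Lemma ex_RInt_continuous_R (f : R -> R) a b : (forall x, continuous f x) -> ex_RInt f a b.
Proof. intros Hf. apply (ex_RInt_continuous (V := R_CompleteNormedModule)); auto. Qed.

Lemma RInt_ext_R (f g : R -> R) a b : (forall x, f x = g x) -> RInt f a b = RInt g a b.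
Proof. intros Hfg. apply RInt_ext. intros; apply Hfg. Qed.

Lemma RInt_scal_R (f : R -> R) k a b :
  ex_RInt f a b -> RInt (fun x => k * f x) a b = k * RInt f a b.
Proof. exact (RInt_scal f a b k). Qed.

Lemma is_derive_RInt_from_0 (f : R -> R) x :
  (forall x, continuous f x) -> is_derive (fun x => RInt f 0 x) x (f x).
Proof.
  intros Hf. apply is_derive_RInt with (a := 0); auto.
  apply filter_forall. intros y. apply RInt_correct, ex_RInt_continuous_R, Hf.
Qed.

Lemma is_derive_0_constant (f : R -> R) : (forall x, is_derive f x 0) -> forall x y, f x = f y.
Proof.
  intros Hf x y.
  destruct (MVT_gen f x y (fun _ => 0)) as [c [_ Hc]].
  - intros z _. apply Hf.
  - intros z _. apply continuity_pt_filterlim, ex_derive_continuous_R. eexists; apply Hf.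
  - lra.
Qed.

Lemma Rabs_diff_le_derive_bound (g dg : R -> R) M a b :
  (forall y, is_derive g y (dg y)) -> (forall y, Rabs (dg y) <= M) ->
  Rabs (g b - g a) <= M * Rabs (b - a).
Proof.
  intros Hg HM.
  destruct (MVT_gen g a b dg) as [c [_ Hc]].
  - intros z _. apply Hg.
  - intros z _. apply continuity_pt_filterlim, ex_derive_continuous_R. eexists; apply Hg.
  - rewrite Hc, Rabs_mult. apply Rmult_le_compat_r; [apply Rabs_pos | apply HM].
Qed.

Lemma taylor_2_remainder_le (f f1 f2 : R -> R) M x h :
  (forall y, is_derive f y (f1 y)) -> (forall y, is_derive f1 y (f2 y)) ->
  (forall y, Rabs (f2 y) <= M) ->
  Rabs (f (x + h) - f x - h * f1 x) <= M * h ^ 2.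
Proof.
  intros Hf Hf1 HM.
  destruct (MVT_gen f x (x + h) f1) as [c [Hc Hfc]].
  - intros z _. apply Hf.
  - intros z _. apply continuity_pt_filterlim, ex_derive_continuous_R. eexists; apply Hf.
  - replace (f (x + h) - f x - h * f1 x) with (h * (f1 c - f1 x)) by (rewrite Hfc; ring).
    pose proof (Rabs_diff_le_derive_bound f1 f2 M x c Hf1 HM) as Hf1c.
    assert (Hcx : Rabs (c - x) <= Rabs h).
    { unfold Rmin, Rmax in Hc. destruct (Rle_dec x (x + h));
        unfold Rabs; destruct (Rcase_abs (c - x)), (Rcase_abs h); lra. }
    assert (0 <= M) by (pose proof (Rabs_pos (f2 0)); specialize (HM 0); lra).
    assert (Rabs (f1 c - f1 x) <= M * Rabs h) by nra.
    rewrite Rabs_mult, <- (pow2_abs h).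
    apply Rle_trans with (Rabs h * (M * Rabs h)); [apply Rmult_le_compat_l; auto; apply Rabs_pos|].
    right; ring.
Qed.

Lemma is_derive_of_remainder_le (F : R -> R) x l M :
  (forall h, Rabs (F (x + h) - F x - h * l) <= M * h ^ 2) -> is_derive F x l.
Proof.
  intros HF. apply is_derive_Reals. intros eps Heps.
  assert (HM : 0 < Rabs M + 1) by (pose proof (Rabs_pos M); lra).
  assert (Hd : 0 < eps / (Rabs M + 1)) by (apply Rdiv_lt_0_compat; lra).
  exists (mkposreal _ Hd). intros h Hh0 Hh. simpl in Hh.
  assert (Hh' : 0 < Rabs h) by (apply Rabs_pos_lt; auto).
  replace ((F (x + h) - F x) / h - l) with ((F (x + h) - F x - h * l) / h) by (field; auto).
  unfold Rdiv. rewrite Rabs_mult, Rabs_inv.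
  apply Rmult_lt_reg_r with (Rabs h); auto. rewrite Rmult_assoc, Rinv_l, Rmult_1_r by lra.
  apply Rle_lt_trans with (M * h ^ 2); [apply HF|].
  rewrite <- (pow2_abs h).
  assert (Rabs h * (Rabs M + 1) < eps).
  { apply Rmult_lt_reg_r with (/ (Rabs M + 1)); [apply Rinv_0_lt_compat; lra|].
    rewrite Rmult_assoc, Rinv_r, Rmult_1_r by lra. exact Hh. }
  pose proof (Rle_abs M). nra.
Qed.

Lemma is_RInt_gen_derive_lim {Fa Fb : (R -> Prop) -> Prop} {FFa : Filter Fa} {FFb : Filter Fb}
  (F f : R -> R) (la lb : R) :
  (forall x, is_derive F x (f x)) -> (forall x, continuous f x) ->
  filterlim F Fa (locally la) -> filterlim F Fb (locally lb) -> is_RInt_gen f Fa Fb (lb - la).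
Proof.
  intros HF Hf Ha Hb.
  apply is_RInt_gen_ext with (Derive F).
  - apply filter_forall. intros ab x _. apply is_derive_unique, HF.
  - apply is_RInt_gen_Derive; auto; apply filter_forall; intros ab x _.
    + eexists; apply HF.
    + apply continuous_ext with f; [intros; symmetry; apply is_derive_unique, HF | apply Hf].
Qed.

Lemma is_RInt_gen_lim (F f : R -> R) (L1 L2 : R) :
  (forall x, is_derive F x (f x)) -> (forall x, continuous f x) ->
  is_lim F m_infty L1 -> is_lim F p_infty L2 -> is_RInt_gen f minf pinf (L2 - L1).
Proof. intros. apply is_RInt_gen_derive_lim with F; auto. Qed.

Lemma is_RInt_gen_plus_R (f g : R -> R) a b :
  is_RInt_gen f minf pinf a -> is_RInt_gen g minf pinf b ->
  is_RInt_gen (fun x => f x + g x) minf pinf (a + b).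
Proof. intros Hf Hg. exact (is_RInt_gen_plus _ _ _ _ Hf Hg). Qed.

Lemma is_RInt_gen_minus_R (f g : R -> R) a b :
  is_RInt_gen f minf pinf a -> is_RInt_gen g minf pinf b ->
  is_RInt_gen (fun x => f x - g x) minf pinf (a - b).
Proof. intros Hf Hg. exact (is_RInt_gen_minus _ _ _ _ Hf Hg). Qed.

Lemma is_RInt_gen_scal_R (f : R -> R) k a :
  is_RInt_gen f minf pinf a -> is_RInt_gen (fun x => k * f x) minf pinf (k * a).
Proof. intros Hf. exact (is_RInt_gen_scal _ _ _ Hf). Qed.

Lemma is_RInt_gen_ext_R (f g : R -> R) a :
  (forall x, f x = g x) -> is_RInt_gen f minf pinf a -> is_RInt_gen g minf pinf a.
Proof. intros Hfg. apply is_RInt_gen_ext, filter_forall. intros; apply Hfg. Qed.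

Lemma is_RInt_gen_uniq_R (f : R -> R) a b :
  is_RInt_gen f minf pinf a -> is_RInt_gen f minf pinf b -> a = b.
Proof.
  intros Ha Hb.
  rewrite <- (is_RInt_gen_unique (V := R_CompleteNormedModule) f a Ha).
  exact (is_RInt_gen_unique (V := R_CompleteNormedModule) f b Hb).
Qed.

Lemma is_RInt_gen_0 : is_RInt_gen (fun _ => 0) minf pinf 0.
Proof.
  pose proof (is_RInt_gen_lim (fun _ => 0) (fun _ => 0) 0 0) as H0.
  rewrite Rminus_0_r in H0. apply H0; auto using is_derive_const, continuous_const, is_lim_const.
Qed.

Lemma is_RInt_gen_abs_le (f g : R -> R) lf lg :
  (forall x, Rabs (f x) <= g x) ->
  is_RInt_gen f minf pinf lf -> is_RInt_gen g minf pinf lg -> Rabs lf <= lg.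
Proof.
  intros Hfg Hf Hg.
  assert (Hle : filter_prod minf pinf (fun ab : R * R => fst ab <= snd ab)).
  { exists (fun x => x < 0) (fun x => 0 < x); try (exists 0; auto). intros; simpl; lra. }
  exact (RInt_gen_norm f g lf lg Hle (filter_forall _ (fun ab x _ => Hfg x)) Hf Hg).
Qed.

Lemma is_RInt_gen_ge_0 (g : R -> R) lg :
  (forall x, 0 <= g x) -> is_RInt_gen g minf pinf lg -> 0 <= lg.
Proof.
  intros Hg Hlg. rewrite <- Rabs_R0.
  apply (is_RInt_gen_abs_le (fun _ => 0) g); auto using is_RInt_gen_0.
  intros; rewrite Rabs_R0; auto.
Qed.

Lemma is_RInt_gen_RInt_from_0 (f : R -> R) (L1 L2 : R) : (forall x, continuous f x) ->
  is_lim (fun x => RInt f 0 x) m_infty L1 -> is_lim (fun x => RInt f 0 x) p_infty L2 ->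
  is_RInt_gen f minf pinf (L2 - L1).
Proof.
  intros. apply is_RInt_gen_lim with (fun x => RInt f 0 x); auto using is_derive_RInt_from_0.
Qed.

Lemma ex_lim_of_dominated_oscillation (F G : R -> R) x (l : R) :
  (forall u v, Rabs (F v - F u) <= Rabs (G v - G u)) -> is_lim G x l ->
  exists l' : R, is_lim F x l'.
Proof.
  intros HFG HG.
  assert (Hc : exists l' : R, filterlim F (Rbar_locally' x) (locally l')).
  { apply (filterlim_locally_cauchy (U := R_CompleteSpace)).
    intros eps. exists (fun u => Rabs (G u - l) < eps / 2). split.
    - apply (HG (fun y => Rabs (y - l) < eps / 2)). exists (pos_div_2 eps). intros y Hy. exact Hy.
    - intros u v Hu Hv. change (Rabs (F v - F u) < eps).
      apply Rle_lt_trans with (Rabs (G v - G u)); auto.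
      replace (G v - G u) with ((G v - l) - (G u - l)) by ring.
      eapply Rle_lt_trans; [apply Rabs_triang|]. rewrite Rabs_Ropp. lra. }
  destruct Hc as [l' Hl']. exists l'. exact Hl'.
Qed.

Lemma RInt_abs_le_primitive (f g G : R -> R) u v :
  (forall x, continuous f x) -> (forall x, 0 <= f x <= g x) ->
  (forall x, is_derive G x (g x)) -> (forall x, continuous g x) ->
  Rabs (RInt f u v) <= Rabs (G v - G u).
Proof.
  intros Hf Hfg HG Hg.
  assert (Hle : forall a b, a <= b -> Rabs (RInt f a b) <= Rabs (G b - G a)).
  { intros a b Hab.
    assert (0 <= RInt f a b)
      by (apply RInt_ge_0; auto using ex_RInt_continuous_R; intros; apply Hfg).
    assert (RInt f a b <= RInt g a b)
      by (apply RInt_le; auto using ex_RInt_continuous_R; intros; apply Hfg).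
    rewrite (is_RInt_unique g a b (G b - G a)) in H0
      by (apply (is_RInt_derive (V := R_CompleteNormedModule)); auto).
    rewrite !Rabs_pos_eq; lra. }
  destruct (Rle_or_lt u v) as [Huv | Hvu]; auto.
  rewrite <- (opp_RInt_swap (V := R_CompleteNormedModule)) by auto using ex_RInt_continuous_R.
  change (Rabs (- RInt f v u) <= Rabs (G v - G u)).
  rewrite Rabs_Ropp, Rabs_minus_sym. apply Hle. lra.
Qed.

Lemma ex_lim_RInt_dominated (f g G : R -> R) (L1 L2 : R) :
  (forall x, continuous f x) -> (forall x, 0 <= f x <= g x) ->
  (forall x, is_derive G x (g x)) -> (forall x, continuous g x) ->
  is_lim G m_infty L1 -> is_lim G p_infty L2 ->
  exists M1 M2 : R,
    is_lim (fun x => RInt f 0 x) m_infty M1 /\ is_lim (fun x => RInt f 0 x) p_infty M2.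
Proof.
  intros Hf Hfg HG Hg HL1 HL2.
  assert (Hosc : forall u v, Rabs (RInt f 0 v - RInt f 0 u) <= Rabs (G v - G u)).
  { intros u v.
    rewrite <- (RInt_Chasles (V := R_CompleteNormedModule) f 0 u v)
      by auto using ex_RInt_continuous_R.
    change (Rabs (RInt f 0 u + RInt f u v - RInt f 0 u) <= Rabs (G v - G u)).
    rewrite Rplus_comm; unfold Rminus; rewrite Rplus_assoc, Rplus_opp_r, Rplus_0_r.
    apply RInt_abs_le_primitive with g; auto. }
  destruct (ex_lim_of_dominated_oscillation _ _ _ _ Hosc HL1) as [M1 H1].
  destruct (ex_lim_of_dominated_oscillation _ _ _ _ Hosc HL2) as [M2 H2].
  exists M1, M2; auto.
Qed.

Lemma is_lim_plus_R (f g : R -> R) x (a b : R) :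
  is_lim f x a -> is_lim g x b -> is_lim (fun t => f t + g t) x (a + b).
Proof. intros Hf Hg. exact (is_lim_plus f g x a b (a + b) Hf Hg eq_refl). Qed.

Lemma is_lim_minus_R (f g : R -> R) x (a b : R) :
  is_lim f x a -> is_lim g x b -> is_lim (fun t => f t - g t) x (a - b).
Proof. intros Hf Hg. exact (is_lim_minus f g x a b (a - b) Hf Hg eq_refl). Qed.

Lemma is_lim_mult_R (f g : R -> R) x (a b : R) :
  is_lim f x a -> is_lim g x b -> is_lim (fun t => f t * g t) x (a * b).
Proof. intros Hf Hg. exact (is_lim_mult f g x a b Hf Hg I). Qed.

Lemma is_lim_scal_R (f : R -> R) k x (a : R) :
  is_lim f x a -> is_lim (fun t => k * f t) x (k * a).
Proof. intros Hf. exact (is_lim_scal_l f k x a Hf). Qed.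

Lemma is_lim_comp_scale_p (g : R -> R) (l : Rbar) m s : 0 < s ->
  is_lim g p_infty l -> is_lim (fun x => g ((x - m) / s)) p_infty l.
Proof.
  intros Hs Hg. apply (is_lim_comp g (fun x => (x - m) / s) p_infty l p_infty); auto.
  - apply is_lim_spec. intros M. exists (m + Rabs M * s + s). intros x Hx.
    apply Rmult_lt_reg_r with s; auto. unfold Rdiv. rewrite Rmult_assoc, Rinv_l by lra.
    pose proof (Rle_abs M). pose proof (Rabs_pos M). nra.
  - exists 0; intros; discriminate.
Qed.

Lemma is_lim_comp_scale_m (g : R -> R) (l : Rbar) m s : 0 < s ->
  is_lim g m_infty l -> is_lim (fun x => g ((x - m) / s)) m_infty l.
Proof.
  intros Hs Hg. apply (is_lim_comp g (fun x => (x - m) / s) m_infty l m_infty); auto.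
  - apply is_lim_spec. intros M. exists (m - Rabs M * s - s). intros x Hx.
    apply Rmult_lt_reg_r with s; auto. unfold Rdiv. rewrite Rmult_assoc, Rinv_l by lra.
    pose proof (Rle_abs (- M)). rewrite Rabs_Ropp in H. pose proof (Rabs_pos M). nra.
  - exists 0; intros; discriminate.
Qed.

Lemma is_lim_comp_reflect_m (g : R -> R) (l : Rbar) c :
  is_lim g p_infty l -> is_lim (fun x => g (c - x)) m_infty l.
Proof.
  intros Hg. apply (is_lim_comp g (fun x => c - x) m_infty l p_infty); auto.
  - apply is_lim_spec. intros M. exists (c - M). intros x Hx. lra.
  - exists 0; intros; discriminate.
Qed.

Lemma is_lim_comp_reflect_p (g : R -> R) (l : Rbar) c :
  is_lim g m_infty l -> is_lim (fun x => g (c - x)) p_infty l.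
Proof.
  intros Hg. apply (is_lim_comp g (fun x => c - x) p_infty l m_infty); auto.
  - apply is_lim_spec. intros M. exists (c - M). intros x Hx. lra.
  - exists 0; intros; discriminate.
Qed.

(** * The Gaussian integral *)

Definition gauss (t : R) := exp (- t ^ 2 / 2).
Definition gauss_aux (x u : R) := exp (- x ^ 2 * (1 + u ^ 2) / 2) / (1 + u ^ 2).
Definition gauss_int (x : R) := RInt gauss 0 x.
Definition gauss_aux_int (x : R) := RInt (gauss_aux x) 0 1.

Lemma gauss_continuous x : continuous gauss x.
Proof. apply ex_derive_continuous_R. unfold gauss. auto_derive. exact I. Qed.

Lemma gauss_aux_continuous x u : continuous (gauss_aux x) u.
Proof. apply ex_derive_continuous_R. unfold gauss_aux. auto_derive. nra. Qed.

Lemma gauss_lim_p : is_lim gauss p_infty 0.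
Proof.
  unfold gauss. eapply is_lim_comp; [apply is_lim_exp_m| |exists 0; intros; discriminate].
  intros P [M HM]. exists (Rabs M + 1). intros x Hx. apply HM.
  pose proof (Rle_abs (- M)). rewrite Rabs_Ropp in H. nra.
Qed.

Lemma gauss_lim_m : is_lim gauss m_infty 0.
Proof.
  unfold gauss. eapply is_lim_comp; [apply is_lim_exp_m| |exists 0; intros; discriminate].
  intros P [M HM]. exists (- (Rabs M + 1)). intros x Hx. apply HM.
  pose proof (Rle_abs (- M)). rewrite Rabs_Ropp in H. nra.
Qed.

Lemma is_derive_gauss_int (x : R) : is_derive gauss_int x (gauss x).
Proof. apply is_derive_RInt_from_0, gauss_continuous. Qed.

Lemma is_derive_gauss_aux (u v : R) :
  is_derive (fun z : R => gauss_aux z v) u (- u * exp (- u ^ 2 * (1 + v ^ 2) / 2)).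
Proof.
  assert (0 < 1 + v ^ 2) by nra. unfold gauss_aux. auto_derive; [lra|].
  replace (- (u * (u * 1)) * (1 + v * (v * 1)) * / 2) with (- u ^ 2 * (1 + v ^ 2) / 2)
    by field.
  field. lra.
Qed.

Lemma continuity_2d_derive_gauss_aux u v :
  continuity_2d_pt (fun u v => - u * exp (- u ^ 2 * (1 + v ^ 2) / 2)) u v.
Proof.
  apply continuity_2d_pt_mult; [apply continuity_2d_pt_opp, continuity_2d_pt_id1|].
  apply continuity_2d_pt_filterlim.
  eapply filterlim_comp;
    [|apply continuity_pt_filterlim, derivable_continuous_pt, derivable_pt_exp].
  apply (continuity_2d_pt_filterlim (fun u v => - u ^ 2 * (1 + v ^ 2) / 2)).
  apply continuity_2d_pt_ext with (fun u v => (-1/2) * ((u * u) * (1 + v * v))).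
  { intros; simpl; field. }
  repeat first [apply continuity_2d_pt_mult | apply continuity_2d_pt_plus
    | apply continuity_2d_pt_id1 | apply continuity_2d_pt_id2 | apply continuity_2d_pt_const].
Qed.

Lemma is_derive_gauss_aux_int (x : R) : is_derive gauss_aux_int x (- gauss x * gauss_int x).
Proof.
  unfold gauss_aux_int.
  replace (- gauss x * gauss_int x)
    with (RInt (fun t => Derive (fun u => gauss_aux u t) x) 0 1).
  - apply is_derive_RInt_param.
    + apply filter_forall. intros y t _. eexists; apply is_derive_gauss_aux.
    + intros t _. eapply continuity_2d_pt_ext; [|apply continuity_2d_derive_gauss_aux].
      intros; symmetry; apply is_derive_unique, is_derive_gauss_aux.
    + apply filter_forall. intros y. apply ex_RInt_continuous_R, gauss_aux_continuous.
  - (* [exp (- x^2 (1 + t^2) / 2) = gauss x * gauss (x t)], then substitute [x t]. *)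
    assert (Hpt : forall t : R, Derive (fun u => gauss_aux u t) x
                                = - gauss x * (x * gauss (x * t + 0))).
    { intros t. rewrite (is_derive_unique _ _ _ (is_derive_gauss_aux x t)). unfold gauss.
      replace (- x ^ 2 * (1 + t ^ 2) / 2) with (- x ^ 2 / 2 + - (x * t + 0) ^ 2 / 2)
        by field.
      rewrite exp_plus. ring. }
    rewrite (RInt_ext_R _ _ _ _ Hpt).
    rewrite RInt_scal_R
      by (apply ex_RInt_continuous_R; intros; apply ex_derive_continuous_R;
          unfold gauss; auto_derive; exact I).
    rewrite (RInt_comp_lin (V := R_CompleteNormedModule))
      by (apply ex_RInt_continuous_R, gauss_continuous).
    replace (x * 0 + 0) with 0 by ring. replace (x * 1 + 0) with x by ring. reflexivity.
Qed.

Lemma gauss_int_sq_plus_aux x : gauss_int x ^ 2 + 2 * gauss_aux_int x = PI / 2.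
Proof.
  assert (Hd : forall y : R, is_derive (fun x => gauss_int x ^ 2 + 2 * gauss_aux_int x) y 0).
  { intros y. auto_derive.
    - split; [eexists; apply is_derive_gauss_int|].
      split; [eexists; apply is_derive_gauss_aux_int | exact I].
    - rewrite (is_derive_unique (fun x : R => gauss_int x) _ _ (is_derive_gauss_int y)),
        (is_derive_unique (fun x : R => gauss_aux_int x) _ _ (is_derive_gauss_aux_int y)).
      ring. }
  rewrite (is_derive_0_constant _ Hd x 0).
  unfold gauss_int, gauss_aux_int. rewrite RInt_point. unfold zero; simpl.
  rewrite (RInt_ext_R _ (fun u => / (1 + u ^ 2))).
  - rewrite (is_RInt_unique _ 0 1 (atan 1 - atan 0)), atan_1, atan_0; [field|].
    apply (is_RInt_derive (V := R_CompleteNormedModule)).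
    + intros. apply is_derive_Reals, derivable_pt_lim_atan.
    + intros. apply ex_derive_continuous_R. auto_derive. nra.
  - intros u. unfold gauss_aux. replace (- 0 ^ 2 * (1 + u ^ 2) / 2) with 0 by field.
    rewrite exp_0. field. nra.
Qed.

Lemma gauss_aux_int_bounds x : 0 <= gauss_aux_int x <= gauss x.
Proof.
  assert (Hk : forall u, 0 <= gauss_aux x u <= gauss x).
  { intros u. unfold gauss_aux, gauss. assert (0 < 1 + u ^ 2) by nra.
    assert (exp (- x ^ 2 * (1 + u ^ 2) / 2) <= exp (- x ^ 2 / 2)).
    { assert (Harg : - x ^ 2 * (1 + u ^ 2) / 2 <= - x ^ 2 / 2) by nra.
      destruct Harg as [Hlt | ->]; [apply Rlt_le, exp_increasing, Hlt | lra]. }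
    pose proof (exp_pos (- x ^ 2 * (1 + u ^ 2) / 2)).
    split; [apply Rdiv_le_0_compat; lra|].
    apply Rmult_le_reg_r with (1 + u ^ 2); auto.
    unfold Rdiv; rewrite Rmult_assoc, Rinv_l by lra. nra. }
  unfold gauss_aux_int. split.
  - apply RInt_ge_0; [lra | apply ex_RInt_continuous_R, gauss_aux_continuous |].
    intros; apply Hk.
  - apply Rle_trans with (RInt (fun _ => gauss x) 0 1).
    + apply RInt_le; [lra | apply ex_RInt_continuous_R, gauss_aux_continuous
                      | apply ex_RInt_continuous_R; intros; apply continuous_const|].
      intros; apply Hk.
    + rewrite RInt_const. unfold scal; simpl; unfold mult; simpl. lra.
Qed.

Lemma gauss_int_lim_p : is_lim gauss_int p_infty (sqrt (PI / 2)).
Proof.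
  apply is_lim_ext_loc with (fun x => sqrt (PI / 2 - 2 * gauss_aux_int x)).
  - exists 0. intros x Hx. rewrite <- (gauss_int_sq_plus_aux x).
    replace (gauss_int x ^ 2 + 2 * gauss_aux_int x - 2 * gauss_aux_int x)
      with (gauss_int x ^ 2) by ring.
    apply sqrt_pow2. apply RInt_ge_0; [lra | apply ex_RInt_continuous_R, gauss_continuous|].
    intros; apply Rlt_le, exp_pos.
  - apply is_lim_comp_continuous with (f := fun x => PI / 2 - 2 * gauss_aux_int x).
    + replace (Finite (PI / 2)) with (Finite (PI / 2 - 2 * 0)) by (f_equal; ring).
      apply is_lim_minus_R; [apply is_lim_const | apply is_lim_scal_R].
      apply is_lim_le_le_loc with (fun _ => 0) gauss.
      * exists 0. intros; apply gauss_aux_int_bounds.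
      * apply is_lim_const.
      * apply gauss_lim_p.
    + apply continuity_pt_filterlim, sqrt_continuity_pt. pose proof PI_RGT_0; lra.
Qed.

(** * The standard normal distribution *)

Lemma sqrt_2PI_pos : 0 < sqrt (2 * PI).
Proof. apply sqrt_lt_R0. pose proof PI_RGT_0; lra. Qed.

Lemma phi_pos x : 0 < phi x.
Proof. apply Rdiv_lt_0_compat; [apply exp_pos | apply sqrt_2PI_pos]. Qed.

Lemma phi_opp x : phi (- x) = phi x.
Proof. unfold phi. replace ((- x) ^ 2) with (x ^ 2) by ring. reflexivity. Qed.

Lemma phi_derive (x : R) : is_derive phi x (- x * phi x).
Proof.
  pose proof sqrt_2PI_pos. unfold phi. auto_derive; [lra|].
  replace (- (x * (x * 1)) * / 2) with (- x ^ 2 / 2) by field. field. lra.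
Qed.

Lemma ex_derive_phi (x : R) : ex_derive phi x.
Proof. eexists; apply phi_derive. Qed.

Lemma Derive_phi (x : R) : Derive (fun y : R => phi y) x = - x * phi x.
Proof. apply is_derive_unique, phi_derive. Qed.

Lemma phi_continuous x : continuous phi x.
Proof. apply ex_derive_continuous_R, ex_derive_phi. Qed.

Lemma phi_lim_p : is_lim phi p_infty 0.
Proof.
  unfold phi, Rdiv. replace (Finite 0) with (Finite (0 * / sqrt (2 * PI))) by (f_equal; ring).
  apply (is_lim_mult_R (fun t => exp (- t ^ 2 / 2)) (fun _ => / sqrt (2 * PI))).
  - apply gauss_lim_p.
  - apply is_lim_const.
Qed.

Lemma phi_lim_m : is_lim phi m_infty 0.
Proof.
  unfold phi, Rdiv. replace (Finite 0) with (Finite (0 * / sqrt (2 * PI))) by (f_equal; ring).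
  apply (is_lim_mult_R (fun t => exp (- t ^ 2 / 2)) (fun _ => / sqrt (2 * PI))).
  - apply gauss_lim_m.
  - apply is_lim_const.
Qed.

Lemma RInt_phi_opp x : RInt phi 0 (- x) = - RInt phi 0 x.
Proof.
  pose proof (RInt_comp_lin (V := R_CompleteNormedModule) phi (-1) 0 0 x) as Hlin.
  replace (-1 * 0 + 0) with 0 in Hlin by ring. replace (-1 * x + 0) with (- x) in Hlin by ring.
  rewrite <- Hlin by (apply ex_RInt_continuous_R, phi_continuous).
  rewrite (RInt_ext_R _ (fun y => -1 * phi y)).
  - rewrite RInt_scal_R by (apply ex_RInt_continuous_R, phi_continuous). lra.
  - intros y. replace (-1 * y + 0) with (- y) by ring. rewrite phi_opp. reflexivity.
Qed.

Lemma RInt_phi_lim_p : is_lim (fun x => RInt phi 0 x) p_infty (1 / 2).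
Proof.
  assert (Hhalf : sqrt (PI / 2) / sqrt (2 * PI) = 1 / 2).
  { pose proof PI_RGT_0. pose proof sqrt_2PI_pos.
    replace (PI / 2) with (2 * PI * (/ 2) ^ 2) by field.
    rewrite sqrt_mult_alt, sqrt_pow2 by lra. field. lra. }
  rewrite <- Hhalf. unfold Rdiv at 2.
  apply is_lim_ext with (fun x => gauss_int x * / sqrt (2 * PI)).
  - intros x. unfold gauss_int. rewrite Rmult_comm, <- RInt_scal_R
      by (apply ex_RInt_continuous_R, gauss_continuous).
    apply RInt_ext_R. intros y. unfold phi, gauss, Rdiv. ring.
  - apply (is_lim_mult_R gauss_int (fun _ => / sqrt (2 * PI))).
    + apply gauss_int_lim_p.
    + apply is_lim_const.
Qed.

Lemma RInt_phi_lim_m : is_lim (fun x => RInt phi 0 x) m_infty (- (1 / 2)).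
Proof.
  apply is_lim_ext with (fun x => - RInt phi 0 (- x)).
  { intros x. rewrite RInt_phi_opp. ring. }
  apply (is_lim_opp (fun x => RInt phi 0 (- x)) m_infty (1 / 2)).
  eapply is_lim_comp; [apply RInt_phi_lim_p | | exists 0; intros; discriminate].
  apply (is_lim_opp (fun x => x) m_infty m_infty), is_lim_id.
Qed.

Lemma Phi_RInt x : Phi x = RInt phi 0 x + 1 / 2.
Proof.
  unfold Phi. apply is_RInt_gen_unique.
  replace (RInt phi 0 x + 1 / 2) with (RInt phi 0 x - - (1 / 2)) by ring.
  apply is_RInt_gen_derive_lim with (fun x => RInt phi 0 x).
  - intros; apply is_derive_RInt_from_0, phi_continuous.
  - apply phi_continuous.
  - apply RInt_phi_lim_m.
  - intros P HP. exact (locally_singleton _ _ HP).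
Qed.

Lemma Phi_derive (x : R) : is_derive Phi x (phi x).
Proof.
  apply is_derive_ext with (fun t => RInt phi 0 t + 1 / 2).
  { intros; symmetry; apply Phi_RInt. }
  pose proof (is_derive_plus _ _ x _ _ (is_derive_RInt_from_0 phi x phi_continuous)
                (is_derive_const (1 / 2) x)) as Hd.
  rewrite plus_zero_r in Hd. exact Hd.
Qed.

Lemma ex_derive_Phi (x : R) : ex_derive Phi x.
Proof. eexists; apply Phi_derive. Qed.

Lemma Derive_Phi (x : R) : Derive (fun y : R => Phi y) x = phi x.
Proof. apply is_derive_unique, Phi_derive. Qed.

Lemma Phi_lim_p : is_lim Phi p_infty 1.
Proof.
  apply is_lim_ext with (fun t => RInt phi 0 t + 1 / 2); [intros; symmetry; apply Phi_RInt|].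
  replace (Finite 1) with (Finite (1 / 2 + 1 / 2)) by (f_equal; field).
  apply is_lim_plus_R; [apply RInt_phi_lim_p | apply is_lim_const].
Qed.

Lemma Phi_lim_m : is_lim Phi m_infty 0.
Proof.
  apply is_lim_ext with (fun t => RInt phi 0 t + 1 / 2); [intros; symmetry; apply Phi_RInt|].
  replace (Finite 0) with (Finite (- (1 / 2) + 1 / 2)) by (f_equal; field).
  apply is_lim_plus_R; [apply RInt_phi_lim_m | apply is_lim_const].
Qed.

Lemma Phi_opp x : Phi (- x) = 1 - Phi x.
Proof. rewrite !Phi_RInt, RInt_phi_opp. field. Qed.

Lemma Phi_0 : Phi 0 = 1 / 2.
Proof. rewrite Phi_RInt, RInt_point. unfold zero; simpl. ring. Qed.

Lemma Phi_bounds x : 0 <= Phi x <= 1.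
Proof.
  assert (Hincr : forall u v, u <= v -> Phi u <= Phi v).
  { intros u v [Huv | ->]; [|lra]. apply Rlt_le.
    apply (incr_function Phi m_infty p_infty phi); try exact I; auto.
    - intros; apply Phi_derive.
    - intros; apply phi_pos. }
  split.
  - apply (is_lim_le_loc Phi (fun _ => Phi x) m_infty 0 (Phi x));
      [exists x; intros; apply Hincr; lra | apply Phi_lim_m | apply is_lim_const].
  - apply (is_lim_le_loc (fun _ => Phi x) Phi p_infty (Phi x) 1);
      [exists x; intros; apply Hincr; lra | apply is_lim_const | apply Phi_lim_p].
Qed.

(* The Mills-ratio bound: [phi y / - y - Phi y] increases on [y < 0] from the limit [0]. *)
Lemma Phi_le_mills y : y < 0 -> Phi y <= phi y / - y.
Proof.
  intros Hy.
  set (k := fun y => phi y / - y - Phi y).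
  assert (Hincr : forall u v, u < v -> v < 0 -> k u < k v).
  { intros u v Huv Hv.
    apply (incr_function k m_infty 0 (fun x => phi x / x ^ 2)); try exact I; auto.
    - intros x _ Hx. simpl in Hx. unfold k. auto_derive.
      + repeat split; auto using ex_derive_phi, ex_derive_Phi; lra.
      + rewrite Derive_phi, Derive_Phi. field. lra.
    - intros x _ Hx. simpl in Hx. apply Rdiv_lt_0_compat; [apply phi_pos | nra]. }
  assert (Hlim : is_lim k m_infty 0).
  { replace (Finite 0) with (Finite (0 - 0)) by (f_equal; ring).
    apply is_lim_minus_R; [|apply Phi_lim_m].
    apply is_lim_le_le_loc with (fun _ => 0) phi; [|apply is_lim_const | apply phi_lim_m].
    exists (-1). intros t Ht. pose proof (phi_pos t). split.
    - apply Rdiv_le_0_compat; lra.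
    - apply Rmult_le_reg_r with (- t); [lra|].
      unfold Rdiv. rewrite Rmult_assoc, Rinv_l by lra. nra. }
  assert (Hk : 0 <= k y).
  { apply (is_lim_le_loc k (fun _ => k y) m_infty 0 (k y));
      [exists y; intros; apply Rlt_le, Hincr; auto | exact Hlim | apply is_lim_const]. }
  unfold k in Hk. lra.
Qed.

Lemma mul_Phi_lim_m : is_lim (fun y => y * Phi y) m_infty 0.
Proof.
  apply is_lim_le_le_loc with (fun y => - phi y) (fun _ => 0).
  - exists 0. intros y Hy. pose proof (Phi_le_mills y Hy). pose proof (Phi_bounds y).
    assert (Phi y * - y <= phi y).
    { apply Rmult_le_reg_r with (/ - y); [apply Rinv_0_lt_compat; lra|].
      rewrite Rmult_assoc, Rinv_r, Rmult_1_r by lra. exact H. }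
    nra.
  - replace (Finite 0) with (Rbar_opp 0) by (simpl; f_equal; ring).
    apply is_lim_opp, phi_lim_m.
  - apply is_lim_const.
Qed.

Lemma mul_Phi_compl_lim_p : is_lim (fun y => y * (1 - Phi y)) p_infty 0.
Proof.
  apply is_lim_ext with (fun y => - (- y * Phi (- y))); [intros; rewrite Phi_opp; ring|].
  replace (Finite 0) with (Rbar_opp 0) by (simpl; f_equal; ring).
  apply (is_lim_opp (fun y => - y * Phi (- y)) p_infty 0).
  apply (is_lim_comp (fun y => y * Phi y) (fun y => - y) p_infty 0 m_infty);
    [apply mul_Phi_lim_m | | exists 0; intros; discriminate].
  apply (is_lim_opp (fun x => x) p_infty p_infty), is_lim_id.
Qed.

Lemma abs_mul_phi_le y : Rabs (y * phi y) <= / sqrt (2 * PI).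
Proof.
  pose proof sqrt_2PI_pos. pose proof (exp_pos (y ^ 2 / 2)).
  assert (Hy : Rabs y <= exp (y ^ 2 / 2)).
  { pose proof (exp_ineq1_le (y ^ 2 / 2)).
    enough (Rabs y <= 1 + y ^ 2 / 2) by lra.
    rewrite <- (pow2_abs y). pose proof (Rabs_pos y). nra. }
  rewrite Rabs_mult, (Rabs_pos_eq (phi y)) by (apply Rlt_le, phi_pos).
  unfold phi. replace (- y ^ 2 / 2) with (- (y ^ 2 / 2)) by field. rewrite exp_Ropp.
  replace (/ sqrt (2 * PI)) with (exp (y ^ 2 / 2) * (/ exp (y ^ 2 / 2) / sqrt (2 * PI)))
    by (field; lra).
  apply Rmult_le_compat_r; auto.
  apply Rdiv_le_0_compat; auto. apply Rlt_le, Rinv_0_lt_compat; auto.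
Qed.

(** * Normal distributions with mean [m] and standard deviation [s] *)

Definition npdf (m s x : R) := phi ((x - m) / s) / s.
Definition ncdf (m s x : R) := Phi ((x - m) / s).

Lemma is_derive_ncdf m s (x : R) : s <> 0 -> is_derive (ncdf m s) x (npdf m s x).
Proof.
  intros Hs. unfold ncdf, npdf. auto_derive; [apply ex_derive_Phi|].
  rewrite Derive_Phi. field_R. auto.
Qed.

Lemma is_derive_npdf m s (x : R) : s <> 0 ->
  is_derive (npdf m s) x (- (x - m) / s ^ 2 * npdf m s x).
Proof.
  intros Hs. unfold npdf. auto_derive; [repeat split; auto using ex_derive_phi|].
  rewrite Derive_phi. field_R. auto.
Qed.

Lemma is_derive_ncdf_mean s x (m : R) : s <> 0 ->
  is_derive (fun m => ncdf m s x) m (- npdf m s x).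
Proof.
  intros Hs. unfold ncdf, npdf. auto_derive; [apply ex_derive_Phi|].
  rewrite Derive_Phi. field_R. auto.
Qed.

Lemma is_derive_npdf_mean s x (m : R) : s <> 0 ->
  is_derive (fun m => - npdf m s x) m ((m - x) / s ^ 2 * npdf m s x).
Proof.
  intros Hs. unfold npdf. auto_derive; [repeat split; auto using ex_derive_phi|].
  rewrite Derive_phi. field_R. auto.
Qed.

Lemma Derive_ncdf m s (x : R) : s <> 0 -> Derive (fun y : R => ncdf m s y) x = npdf m s x.
Proof. intros; apply is_derive_unique, is_derive_ncdf; auto. Qed.

Lemma Derive_npdf m s (x : R) : s <> 0 ->
  Derive (fun y : R => npdf m s y) x = - (x - m) / s ^ 2 * npdf m s x.
Proof. intros; apply is_derive_unique, is_derive_npdf; auto. Qed.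

Lemma ex_derive_ncdf m s (x : R) : s <> 0 -> ex_derive (fun y : R => ncdf m s y) x.
Proof. intros; eexists; apply is_derive_ncdf; auto. Qed.

Lemma ex_derive_npdf m s (x : R) : s <> 0 -> ex_derive (fun y : R => npdf m s y) x.
Proof. intros; eexists; apply is_derive_npdf; auto. Qed.

(* Side conditions of [auto_derive]; a plain [apply] would try to unify [ncdf] with [npdf]
   by unfolding both, hence the syntactic dispatch. *)
Ltac ex_derive_normal :=
  repeat match goal with
  | |- _ /\ _ => split
  | |- True => constructor
  | |- ex_derive (fun _ => ncdf _ _ _) _ => apply ex_derive_ncdf; lra
  | |- ex_derive (fun _ => npdf _ _ _) _ => apply ex_derive_npdf; lra
  end.

Lemma abs_derive_npdf_mean_le m s x : 0 < s ->
  Rabs ((m - x) / s ^ 2 * npdf m s x) <= / sqrt (2 * PI) / s ^ 2.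
Proof.
  intros Hs.
  assert (Hnpdf : npdf m s x = phi ((m - x) / s) / s).
  { unfold npdf. rewrite <- (phi_opp ((m - x) / s)).
    replace (- ((m - x) / s)) with ((x - m) / s) by (field; lra). reflexivity. }
  rewrite Hnpdf.
  replace ((m - x) / s ^ 2 * (phi ((m - x) / s) / s))
    with ((m - x) / s * phi ((m - x) / s) * / s ^ 2) by (field; lra).
  assert (0 < / s ^ 2) by (apply Rinv_0_lt_compat; nra).
  rewrite Rabs_mult, (Rabs_pos_eq (/ s ^ 2)) by lra.
  apply Rmult_le_compat_r; [lra | apply abs_mul_phi_le].
Qed.

Lemma npdf_continuous m s x : s <> 0 -> continuous (npdf m s) x.
Proof. intros; apply ex_derive_continuous_R, ex_derive_npdf; auto. Qed.

Lemma ncdf_continuous m s x : s <> 0 -> continuous (ncdf m s) x.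
Proof. intros; apply ex_derive_continuous_R, ex_derive_ncdf; auto. Qed.

Lemma npdf_pos m s x : 0 < s -> 0 < npdf m s x.
Proof. intros; apply Rdiv_lt_0_compat; auto using phi_pos. Qed.

Lemma ncdf_swap m s x : s <> 0 -> ncdf m s x = 1 - ncdf x s m.
Proof. intros. unfold ncdf. rewrite <- Phi_opp. f_equal. field; auto. Qed.

Lemma npdf_swap m s x : s <> 0 -> npdf m s x = npdf x s m.
Proof.
  intros. unfold npdf. rewrite <- (phi_opp ((m - x) / s)).
  replace (- ((m - x) / s)) with ((x - m) / s) by (field; auto). reflexivity.
Qed.

Lemma ncdf_lim_p m s : 0 < s -> is_lim (ncdf m s) p_infty 1.
Proof. intros; apply is_lim_comp_scale_p, Phi_lim_p; auto. Qed.

Lemma ncdf_lim_m m s : 0 < s -> is_lim (ncdf m s) m_infty 0.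
Proof. intros; apply is_lim_comp_scale_m, Phi_lim_m; auto. Qed.

Lemma npdf_lim_p m s : 0 < s -> is_lim (npdf m s) p_infty 0.
Proof.
  intros Hs. unfold npdf. replace (Finite 0) with (Finite (0 * / s)) by (f_equal; ring).
  apply (is_lim_mult_R (fun x => phi ((x - m) / s)) (fun _ => / s));
    [apply is_lim_comp_scale_p, phi_lim_p; auto | apply is_lim_const].
Qed.

Lemma npdf_lim_m m s : 0 < s -> is_lim (npdf m s) m_infty 0.
Proof.
  intros Hs. unfold npdf. replace (Finite 0) with (Finite (0 * / s)) by (f_equal; ring).
  apply (is_lim_mult_R (fun x => phi ((x - m) / s)) (fun _ => / s));
    [apply is_lim_comp_scale_m, phi_lim_m; auto | apply is_lim_const].
Qed.

Lemma mul_ncdf_lim_m m s : 0 < s -> is_lim (fun x => (x - m) * ncdf m s x) m_infty 0.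
Proof.
  intros Hs. apply is_lim_ext with (fun x => (x - m) / s * Phi ((x - m) / s) * s).
  { intros; unfold ncdf; field; lra. }
  replace (Finite 0) with (Finite (0 * s)) by (f_equal; ring).
  apply (is_lim_mult_R _ (fun _ => s)); [|apply is_lim_const].
  apply (is_lim_comp_scale_m (fun y => y * Phi y)), mul_Phi_lim_m; auto.
Qed.

Lemma mul_ncdf_compl_lim_p m s : 0 < s -> is_lim (fun x => (x - m) * (1 - ncdf m s x)) p_infty 0.
Proof.
  intros Hs. apply is_lim_ext with (fun x => (x - m) / s * (1 - Phi ((x - m) / s)) * s).
  { intros; unfold ncdf; field; lra. }
  replace (Finite 0) with (Finite (0 * s)) by (f_equal; ring).
  apply (is_lim_mult_R _ (fun _ => s)); [|apply is_lim_const].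
  apply (is_lim_comp_scale_p (fun y => y * (1 - Phi y))), mul_Phi_compl_lim_p; auto.
Qed.

Lemma is_RInt_gen_npdf m s : 0 < s -> is_RInt_gen (npdf m s) minf pinf 1.
Proof.
  intros Hs. replace 1 with (1 - 0) by ring.
  apply is_RInt_gen_lim with (ncdf m s); auto using ncdf_lim_m, ncdf_lim_p.
  - intros; apply is_derive_ncdf; lra.
  - intros; apply npdf_continuous; lra.
Qed.

Lemma npdf_mul ma sa mb sb x : 0 < sa -> 0 < sb ->
  npdf ma sa x * npdf mb sb x =
  npdf ma (sqrt (sa ^ 2 + sb ^ 2)) mb *
  npdf ((ma * sb ^ 2 + mb * sa ^ 2) / (sa ^ 2 + sb ^ 2)) (sa * sb / sqrt (sa ^ 2 + sb ^ 2)) x.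
Proof.
  intros Ha Hb.
  set (S := sqrt (sa ^ 2 + sb ^ 2)). set (t := sa * sb / S).
  set (c := (ma * sb ^ 2 + mb * sa ^ 2) / (sa ^ 2 + sb ^ 2)).
  assert (HS : 0 < S) by (apply sqrt_lt_R0; nra).
  assert (HS2 : S ^ 2 = sa ^ 2 + sb ^ 2) by (apply pow2_sqrt; nra).
  assert (Ht : 0 < t) by (apply Rdiv_lt_0_compat; nra).
  pose proof sqrt_2PI_pos.
  assert (Hexp : exp (- ((x - ma) / sa) ^ 2 / 2) * exp (- ((x - mb) / sb) ^ 2 / 2) =
                 exp (- ((mb - ma) / S) ^ 2 / 2) * exp (- ((x - c) / t) ^ 2 / 2)).
  { rewrite <- !exp_plus. f_equal.
    replace (((mb - ma) / S) ^ 2) with ((mb - ma) ^ 2 / S ^ 2) by (field; lra).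
    replace (((x - c) / t) ^ 2) with ((x - c) ^ 2 * S ^ 2 / (sa ^ 2 * sb ^ 2))
      by (unfold t; field; lra).
    rewrite HS2. unfold c. field. split; nra. }
  unfold npdf, phi.
  transitivity (exp (- ((x - ma) / sa) ^ 2 / 2) * exp (- ((x - mb) / sb) ^ 2 / 2)
                / (sqrt (2 * PI) ^ 2 * (sa * sb))); [field; lra|].
  rewrite Hexp. replace (sa * sb) with (S * t) by (unfold t; field; lra).
  field. lra.
Qed.

Lemma is_RInt_gen_npdf_mul ma sa mb sb : 0 < sa -> 0 < sb ->
  is_RInt_gen (fun x => npdf ma sa x * npdf mb sb x) minf pinf
    (npdf ma (sqrt (sa ^ 2 + sb ^ 2)) mb).
Proof.
  intros Ha Hb.
  assert (HS : 0 < sqrt (sa ^ 2 + sb ^ 2)) by (apply sqrt_lt_R0; nra).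
  rewrite <- (Rmult_1_r (npdf ma _ mb)).
  eapply is_RInt_gen_ext_R; [intros x; symmetry; apply npdf_mul; auto|].
  apply is_RInt_gen_scal_R, is_RInt_gen_npdf. apply Rdiv_lt_0_compat; nra.
Qed.

(** * The integral of [ncdf m s * npdf m' s'] *)

Section Cdf_pdf.

Variables s m' s' : R.
Hypotheses (Hs : 0 < s) (Hs' : 0 < s').

Definition cdf_pdf (m x : R) := ncdf m s x * npdf m' s' x.
Definition cdf_pdf_int (m : R) := RInt_gen (cdf_pdf m) minf pinf.

Lemma cdf_pdf_continuous m x : continuous (cdf_pdf m) x.
Proof.
  apply (continuous_mult (ncdf m s) (npdf m' s'));
    [apply ncdf_continuous | apply npdf_continuous]; lra.
Qed.

Lemma ex_lim_RInt_cdf_pdf m : exists L1 L2 : R,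
  is_lim (fun x => RInt (cdf_pdf m) 0 x) m_infty L1 /\
  is_lim (fun x => RInt (cdf_pdf m) 0 x) p_infty L2.
Proof.
  apply ex_lim_RInt_dominated with (npdf m' s') (ncdf m' s') 0 1.
  - apply cdf_pdf_continuous.
  - intros x. unfold cdf_pdf, ncdf.
    pose proof (npdf_pos m' s' x Hs'). pose proof (Phi_bounds ((x - m) / s)). nra.
  - intros; apply is_derive_ncdf; lra.
  - intros; apply npdf_continuous; lra.
  - apply ncdf_lim_m; auto.
  - apply ncdf_lim_p; auto.
Qed.

Lemma is_RInt_gen_cdf_pdf m : is_RInt_gen (cdf_pdf m) minf pinf (cdf_pdf_int m).
Proof.
  destruct (ex_lim_RInt_cdf_pdf m) as [L1 [L2 [H1 H2]]].
  pose proof (is_RInt_gen_RInt_from_0 _ L1 L2 (cdf_pdf_continuous m) H1 H2) as H.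
  unfold cdf_pdf_int. rewrite (is_RInt_gen_unique (V := R_CompleteNormedModule) _ _ H).
  exact H.
Qed.

(* By the reflection [x |-> 2 m' - x], the integrand and its mirror image add up to
   [npdf m' s'], whose integral is [1]. *)
Lemma cdf_pdf_int_self : cdf_pdf_int m' = 1 / 2.
Proof.
  destruct (ex_lim_RInt_cdf_pdf m') as [L1 [L2 [H1 H2]]].
  set (f := cdf_pdf m') in *. set (F := fun x => RInt f 0 x) in *.
  assert (Hf : forall x, continuous f x) by apply cdf_pdf_continuous.
  assert (Hval : cdf_pdf_int m' = L2 - L1).
  { apply (is_RInt_gen_uniq_R f);
      [apply is_RInt_gen_cdf_pdf | apply is_RInt_gen_RInt_from_0; auto]. }
  assert (Hrefl : forall x, f x + f (2 * m' - x) = npdf m' s' x).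
  { intros x. unfold f, cdf_pdf.
    rewrite (npdf_swap m' s' (2 * m' - x)), (ncdf_swap m' s (2 * m' - x)) by lra.
    unfold ncdf, npdf.
    replace ((m' - (2 * m' - x)) / s) with ((x - m') / s) by (field; lra).
    replace ((m' - (2 * m' - x)) / s') with ((x - m') / s') by (field; lra). ring. }
  assert (HF : forall x : R, is_derive F x (f x)) by (intros; apply is_derive_RInt_from_0, Hf).
  clearbody F.
  assert (HI : is_RInt_gen (npdf m' s') minf pinf ((L2 - L1) - (L1 - L2))).
  { apply is_RInt_gen_lim with (fun x => F x - F (2 * m' - x)).
    - intros x. auto_derive.
      + split; [eexists; apply HF | split; [eexists; apply HF | auto]].
      + rewrite !(is_derive_unique (fun x : R => F x) _ _ (HF _)), <- Hrefl. field_R.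
    - intros; apply npdf_continuous; lra.
    - apply is_lim_minus_R; [exact H1 | apply is_lim_comp_reflect_m, H2].
    - apply is_lim_minus_R; [exact H2 | apply is_lim_comp_reflect_p, H1]. }
  pose proof (is_RInt_gen_uniq_R _ _ _ HI (is_RInt_gen_npdf m' s' Hs')). lra.
Qed.

(* Differentiation under the integral sign in [m], justified by a second-order Taylor bound
   that is uniform in [x]. *)
Lemma cdf_pdf_int_remainder m h :
  Rabs (cdf_pdf_int (m + h) - cdf_pdf_int m + h * npdf m (sqrt (s ^ 2 + s' ^ 2)) m')
    <= / sqrt (2 * PI) / s ^ 2 * h ^ 2.
Proof.
  set (M := / sqrt (2 * PI) / s ^ 2).
  apply (is_RInt_gen_abs_le
    (fun x => cdf_pdf (m + h) x - cdf_pdf m x + h * (npdf m s x * npdf m' s' x))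
    (fun x => M * h ^ 2 * npdf m' s' x)).
  - intros x. unfold cdf_pdf.
    replace (ncdf (m + h) s x * npdf m' s' x - ncdf m s x * npdf m' s' x
             + h * (npdf m s x * npdf m' s' x))
      with (npdf m' s' x * (ncdf (m + h) s x - ncdf m s x - h * - npdf m s x)) by ring.
    rewrite Rabs_mult, Rabs_pos_eq, Rmult_comm by (apply Rlt_le, npdf_pos; auto).
    apply Rmult_le_compat_r; [apply Rlt_le, npdf_pos; auto|].
    apply (taylor_2_remainder_le (fun u => ncdf u s x) (fun u => - npdf u s x)
             (fun u => (u - x) / s ^ 2 * npdf u s x)).
    + intros; apply is_derive_ncdf_mean; lra.
    + intros; apply is_derive_npdf_mean; lra.
    + intros u. apply abs_derive_npdf_mean_le; auto.
  - apply is_RInt_gen_plus_R; [apply is_RInt_gen_minus_R; apply is_RInt_gen_cdf_pdf|].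
    apply is_RInt_gen_scal_R, is_RInt_gen_npdf_mul; auto.
  - pose proof (is_RInt_gen_scal_R _ (M * h ^ 2) _ (is_RInt_gen_npdf m' s' Hs')) as H.
    rewrite Rmult_1_r in H. exact H.
Qed.

Lemma is_derive_cdf_pdf_int (m : R) :
  is_derive cdf_pdf_int m (- npdf m (sqrt (s ^ 2 + s' ^ 2)) m').
Proof.
  apply is_derive_of_remainder_le with (/ sqrt (2 * PI) / s ^ 2).
  intros h.
  replace (cdf_pdf_int (m + h) - cdf_pdf_int m - h * - npdf m (sqrt (s ^ 2 + s' ^ 2)) m')
    with (cdf_pdf_int (m + h) - cdf_pdf_int m + h * npdf m (sqrt (s ^ 2 + s' ^ 2)) m')
    by ring.
  apply cdf_pdf_int_remainder.
Qed.

Lemma cdf_pdf_int_eq m : cdf_pdf_int m = ncdf m (sqrt (s ^ 2 + s' ^ 2)) m'.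
Proof.
  set (S := sqrt (s ^ 2 + s' ^ 2)).
  assert (HS : 0 < S) by (apply sqrt_lt_R0; nra).
  assert (Hd : forall u : R, is_derive (fun u => cdf_pdf_int u - ncdf u S m') u 0).
  { intros u.
    pose proof (is_derive_minus _ _ u _ _ (is_derive_cdf_pdf_int u)
                  (is_derive_ncdf_mean S m' u ltac:(lra))) as Hu.
    rewrite minus_eq_zero in Hu. exact Hu. }
  pose proof (is_derive_0_constant _ Hd m m') as Hm.
  cbv beta in Hm. rewrite cdf_pdf_int_self in Hm. unfold ncdf in *.
  replace ((m' - m') / S) with 0 in Hm by (field; lra). rewrite Phi_0 in Hm. lra.
Qed.

End Cdf_pdf.

Lemma is_RInt_gen_ncdf_mul_npdf m s m' s' : 0 < s -> 0 < s' ->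
  is_RInt_gen (fun x => ncdf m s x * npdf m' s' x) minf pinf (ncdf m (sqrt (s ^ 2 + s' ^ 2)) m').
Proof.
  intros Hs Hs'. rewrite <- cdf_pdf_int_eq by auto. apply is_RInt_gen_cdf_pdf; auto.
Qed.

(** * The integral of [(1 - ncdf ma sa) * ncdf mb sb] *)

Definition ccdf_cdf_int (ma sa mb sb : R) :=
  sqrt (sa ^ 2 + sb ^ 2) * U ((ma - mb) / sqrt (sa ^ 2 + sb ^ 2)).

Section Ccdf_cdf.

Variables ma sa mb sb : R.
Hypotheses (Ha : 0 < sa) (Hb : 0 < sb).

Definition ccdf_cdf_prim (x : R) :=
  (x - mb) * ncdf mb sb x * (1 - ncdf ma sa x)
  - sa ^ 2 * (ncdf mb sb x * npdf ma sa x) + sb ^ 2 * (npdf mb sb x * (1 - ncdf ma sa x)).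

Lemma is_derive_ccdf_cdf_prim (x : R) :
  is_derive ccdf_cdf_prim x
    ((1 - ncdf ma sa x) * ncdf mb sb x - (ma - mb) * (ncdf mb sb x * npdf ma sa x)
     - (sa ^ 2 + sb ^ 2) * (npdf mb sb x * npdf ma sa x)).
Proof.
  unfold ccdf_cdf_prim. auto_derive.
  - ex_derive_normal.
  - rewrite !Derive_ncdf, !Derive_npdf by lra. field_R. lra.
Qed.

Lemma ccdf_cdf_prim_lim_m : is_lim ccdf_cdf_prim m_infty 0.
Proof.
  replace (Finite 0) with (Finite (0 * (1 - 0) - sa ^ 2 * (0 * 0) + sb ^ 2 * (0 * (1 - 0))))
    by (f_equal; ring).
  apply is_lim_plus_R; [apply is_lim_minus_R|]; [apply is_lim_mult_R| |].
  - apply (mul_ncdf_lim_m mb sb Hb).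
  - apply is_lim_minus_R; [apply is_lim_const | apply ncdf_lim_m; auto].
  - apply is_lim_scal_R, is_lim_mult_R; [apply ncdf_lim_m | apply npdf_lim_m]; auto.
  - apply is_lim_scal_R, is_lim_mult_R; [apply npdf_lim_m; auto|].
    apply is_lim_minus_R; [apply is_lim_const | apply ncdf_lim_m; auto].
Qed.

Lemma ccdf_cdf_prim_lim_p : is_lim ccdf_cdf_prim p_infty 0.
Proof.
  apply is_lim_ext with (fun x =>
    ncdf mb sb x * ((x - ma) * (1 - ncdf ma sa x) + (ma - mb) * (1 - ncdf ma sa x))
    - sa ^ 2 * (ncdf mb sb x * npdf ma sa x) + sb ^ 2 * (npdf mb sb x * (1 - ncdf ma sa x))).
  { intros x. unfold ccdf_cdf_prim. ring. }
  replace (Finite 0)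
    with (Finite (1 * (0 + (ma - mb) * (1 - 1)) - sa ^ 2 * (1 * 0) + sb ^ 2 * (0 * (1 - 1))))
    by (f_equal; ring).
  assert (Hcompl : is_lim (fun x => 1 - ncdf ma sa x) p_infty (1 - 1)).
  { apply is_lim_minus_R; [apply is_lim_const | apply ncdf_lim_p; auto]. }
  apply is_lim_plus_R; [apply is_lim_minus_R|]; [apply is_lim_mult_R| |].
  - apply ncdf_lim_p; auto.
  - apply is_lim_plus_R; [apply mul_ncdf_compl_lim_p; auto | apply is_lim_scal_R, Hcompl].
  - apply is_lim_scal_R, is_lim_mult_R; [apply ncdf_lim_p | apply npdf_lim_p]; auto.
  - apply is_lim_scal_R, is_lim_mult_R; [apply npdf_lim_p; auto | apply Hcompl].
Qed.

Lemma is_RInt_gen_ccdf_mul_cdf :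
  is_RInt_gen (fun x => (1 - ncdf ma sa x) * ncdf mb sb x) minf pinf (ccdf_cdf_int ma sa mb sb).
Proof.
  set (S := sqrt (sb ^ 2 + sa ^ 2)).
  assert (HS : 0 < S) by (apply sqrt_lt_R0; nra).
  assert (HS2 : S ^ 2 = sb ^ 2 + sa ^ 2) by (apply pow2_sqrt; nra).
  assert (Hcont : forall x, continuous (fun x =>
    (1 - ncdf ma sa x) * ncdf mb sb x - (ma - mb) * (ncdf mb sb x * npdf ma sa x)
    - (sa ^ 2 + sb ^ 2) * (npdf mb sb x * npdf ma sa x)) x).
  { intros x. apply ex_derive_continuous_R. auto_derive. ex_derive_normal. }
  pose proof (is_RInt_gen_lim _ _ _ _ is_derive_ccdf_cdf_prim Hcont
                ccdf_cdf_prim_lim_m ccdf_cdf_prim_lim_p) as Hprim.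
  pose proof (is_RInt_gen_ncdf_mul_npdf mb sb ma sa Hb Ha) as Hcdf_pdf.
  pose proof (is_RInt_gen_npdf_mul mb sb ma sa Hb Ha) as Hpdf_pdf.
  fold S in Hcdf_pdf, Hpdf_pdf.
  replace (ccdf_cdf_int ma sa mb sb)
    with (0 - 0 + (ma - mb) * ncdf mb S ma + (sa ^ 2 + sb ^ 2) * npdf mb S ma).
  - eapply is_RInt_gen_ext_R; [|apply is_RInt_gen_plus_R; [apply is_RInt_gen_plus_R|]];
      [| exact Hprim | apply is_RInt_gen_scal_R, Hcdf_pdf | apply is_RInt_gen_scal_R, Hpdf_pdf].
    intros x. cbv beta. ring.
  - unfold ccdf_cdf_int, U, ncdf, npdf, phi. rewrite !(Rplus_comm (sa ^ 2)). fold S.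
    rewrite <- HS2. pose proof sqrt_2PI_pos. field. lra.
Qed.

End Ccdf_cdf.

(** * Mixtures *)

Lemma sumR_ext n f g : (forall j, (j < n)%nat -> f j = g j) -> sumR n f = sumR n g.
Proof. induction n; simpl; intros H; auto. rewrite IHn, H; auto. Qed.

Lemma sumR_plus n f g : sumR n (fun j => f j + g j) = sumR n f + sumR n g.
Proof. induction n; simpl; [ring | rewrite IHn; ring]. Qed.

Lemma sumR_minus n f g : sumR n (fun j => f j - g j) = sumR n f - sumR n g.
Proof. induction n; simpl; [ring | rewrite IHn; ring]. Qed.

Lemma sumR_mult_r n f k : sumR n f * k = sumR n (fun j => f j * k).
Proof. induction n; simpl; [ring | rewrite <- IHn; ring]. Qed.

Lemma sumR_mult_sumR n m f g :
  sumR n f * sumR m g = sumR n (fun j => sumR m (fun k => f j * g k)).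
Proof.
  rewrite sumR_mult_r. apply sumR_ext. intros j _.
  rewrite Rmult_comm, sumR_mult_r. apply sumR_ext. intros; ring.
Qed.

Lemma sumR_swap n m f :
  sumR n (fun j => sumR m (fun k => f j k)) = sumR m (fun k => sumR n (fun j => f j k)).
Proof.
  induction n; simpl.
  - induction m; simpl; [reflexivity | rewrite <- IHm; ring].
  - rewrite IHn, <- sumR_plus. reflexivity.
Qed.

Lemma is_RInt_gen_sumR n (f : nat -> R -> R) v :
  (forall j, (j < n)%nat -> is_RInt_gen (f j) minf pinf (v j)) ->
  is_RInt_gen (fun x => sumR n (fun j => f j x)) minf pinf (sumR n v).
Proof.
  induction n; intros H; simpl.
  - apply is_RInt_gen_0.
  - apply is_RInt_gen_plus_R; [apply IHn; intros; apply H; lia | apply H; lia].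
Qed.

Definition mixture_ccdf_cdf_int n (p mu s : nat -> R) n' (p' mu' s' : nat -> R) :=
  sumR n (fun j => sumR n' (fun k => p j * p' k * ccdf_cdf_int (mu j) (s j) (mu' k) (s' k))).

Lemma one_minus_CDF n p mu s x : sumR n p = 1 ->
  1 - CDF n p mu s x = sumR n (fun j => p j * (1 - ncdf (mu j) (s j) x)).
Proof.
  intros Hp. transitivity (sumR n p - CDF n p mu s x); [rewrite Hp; reflexivity|].
  unfold CDF. rewrite <- sumR_minus. apply sumR_ext. intros; unfold ncdf; ring.
Qed.

Lemma is_RInt_gen_ccdf_mul_cdf_mixture n p mu s n' p' mu' s' : sumR n p = 1 ->
  (forall j, (j < n)%nat -> 0 < s j) -> (forall k, (k < n')%nat -> 0 < s' k) ->
  is_RInt_gen (fun x => (1 - CDF n p mu s x) * CDF n' p' mu' s' x) minf pinf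
    (mixture_ccdf_cdf_int n p mu s n' p' mu' s').
Proof.
  intros Hp Hs Hs'.
  apply is_RInt_gen_ext_R with (fun x => sumR n (fun j => sumR n' (fun k =>
    p j * p' k * ((1 - ncdf (mu j) (s j) x) * ncdf (mu' k) (s' k) x)))).
  - intros x. rewrite one_minus_CDF by auto. unfold CDF. rewrite sumR_mult_sumR.
    apply sumR_ext. intros j _. apply sumR_ext. intros k _. unfold ncdf. ring.
  - apply is_RInt_gen_sumR. intros j Hj.
    apply (is_RInt_gen_sumR n' (fun k x => p j * p' k * _)). intros k Hk.
    apply is_RInt_gen_scal_R, is_RInt_gen_ccdf_mul_cdf; auto.
Qed.

Lemma self_mixture n p mu s : self n p mu s = mixture_ccdf_cdf_int n p mu s n p mu s.
Proof.
  apply sumR_ext. intros j _. apply sumR_ext. intros k _. unfold ccdf_cdf_int. ring.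
Qed.

Lemma cross_mixture n p mu s n' p' mu' s' :
  cross n p mu s n' p' mu' s' =
  mixture_ccdf_cdf_int n p mu s n' p' mu' s' + mixture_ccdf_cdf_int n' p' mu' s' n p mu s.
Proof.
  unfold mixture_ccdf_cdf_int. rewrite (sumR_swap n'), <- sumR_plus.
  apply sumR_ext. intros j _. rewrite <- sumR_plus. apply sumR_ext. intros k _.
  unfold ccdf_cdf_int. rewrite (Rplus_comm (s' k ^ 2)). ring.
Qed.

Theorem mainTheorem4 (n : nat) (p mu s : nat -> R) (n' : nat) (p' mu' s' : nat -> R)
  (H1 : is_mixture n p mu s) (H2 : is_mixture n' p' mu' s')
  (Hs : forall j, (j < n)%nat -> 0 < s j)
  (Hs' : forall k, (k < n')%nat -> 0 < s' k) :
  is_RInt_gen (fun x => (CDF n p mu s x - CDF n' p' mu' s' x) ^ 2)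
    (Rbar_locally m_infty) (Rbar_locally p_infty)
    (cross n p mu s n' p' mu' s' - self n p mu s - self n' p' mu' s')
  /\ (C2 n p mu s n' p' mu' s') ^ 2
     = cross n p mu s n' p' mu' s' - self n p mu s - self n' p' mu' s'.
Proof.
  destruct H1 as [_ Hp], H2 as [_ Hp'].
  assert (Hint : is_RInt_gen (fun x => (CDF n p mu s x - CDF n' p' mu' s' x) ^ 2) minf pinf
                   (cross n p mu s n' p' mu' s' - self n p mu s - self n' p' mu' s')).
  { rewrite cross_mixture, !self_mixture.
    eapply is_RInt_gen_ext_R;
      [|apply is_RInt_gen_minus_R; [apply is_RInt_gen_minus_R; [apply is_RInt_gen_plus_R|]|]];
      try (apply is_RInt_gen_ccdf_mul_cdf_mixture; auto).
    intros x. cbv beta. ring. }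
  split; [exact Hint|].
  unfold C2. rewrite (is_RInt_gen_unique (V := R_CompleteNormedModule) _ _ Hint).
  apply pow2_sqrt, (is_RInt_gen_ge_0 _ _ (fun x => pow2_ge_0 _) Hint).
Qed.
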